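(* Let $I$ be a finite index set and let $\mathcal{F}:=\bigcup_{i\in I}\{p_i,p_i'\}$ be a family of vectors in $\mathbb{R}^d$ such that: (i) there is a nonzero vector $c$ with $(p_i+p_i')/2=c$ for all $i\in I$; (ii) $\langle p_i,p_i'\rangle=0$ for all $i\in I$; (iii) there is a subset $J\subseteq I$ of odd cardinality with $\sum_{j\in J}p_j=|J|\,c$; (iv) all pairwise inner products of vectors in $\mathcal{F}$ are nonnegative. Then the Gram matrix $\mathrm{Gram}(\mathcal{F})$ is doubly nonnegative but not completely positive.
   Context: $\mathrm{Gram}(\mathcal{F})$ is the matrix indexed by the members of the family $\mathcal{F}$ (with the $2|I|$ vectors $p_i,p_i'$, $i\in I$, as indices) whose entries are the pairwise inner products. A real symmetric matrix is doubly nonnegative if it is positive semidefinite and entrywise nonnegative. An $N\times N$ matrix $X$ is completely positive if there exist $k\ge1$ and entrywise nonnegative vectors $a_1,\dots,a_N\in\mathbb{R}^k_+$ with $X_{ij}=\langle a_i,a_j\rangle$ for all $i,j$. *)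

From HB Require Import structures.
From mathcomp Require Import all_boot all_order all_algebra.
From mathcomp Require Import reals.
Set Implicit Arguments. Unset Strict Implicit. Unset Printing Implicit Defensive.
Import Order.TTheory GRing.Theory Num.Theory.
Local Open Scope ring_scope.

Definition inner (R : realType) (d : nat) (u v : 'rV[R]_d) : R :=
  \sum_(t < d) u 0 t * v 0 t.

(* the family F = U_{i in I} {p_i, p'_i}, indexed by 'I_(n + n):
   the first n indices give p_i, the last n give p'_i *)
Definition fam (R : realType) (d n : nat) (p p' : 'I_n -> 'rV[R]_d)
  (k : 'I_(n + n)) : 'rV[R]_d :=
  match split k with inl i => p i | inr i => p' i end.

Definition Gram (R : realType) (d N : nat) (f : 'I_N -> 'rV[R]_d) : 'M[R]_N :=
  \matrix_(k, l) inner (f k) (f l).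

Definition psd (R : realType) (N : nat) (A : 'M[R]_N) : Prop :=
  forall x : 'rV[R]_N, 0 <= (x *m A *m x^T) 0 0.

Definition doubly_nonneg (R : realType) (N : nat) (A : 'M[R]_N) : Prop :=
  A^T = A /\ psd A /\ (forall i j, 0 <= A i j).

Definition completely_positive (R : realType) (N : nat) (X : 'M[R]_N) : Prop :=
  exists k : nat, (1 <= k)%N /\
    exists a : 'I_N -> 'rV[R]_k,
      (forall i t, 0 <= a i 0 t) /\ (forall i j, X i j = inner (a i) (a j)).

From HB Require Import structures.
From mathcomp Require Import all_boot all_order all_algebra.
From mathcomp Require Import reals.
Import Order.TTheory GRing.Theory Num.Theory.
Local Open Scope ring_scope.
Set Implicit Arguments. Unset Strict Implicit.

(* A completely positive factorisation [a] of Gram(F) has the same Gram matrix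
   as [F], so every linear relation among the vectors of [F] also holds among
   the nonnegative vectors [a].  Writing [q i], [q' i] for the images of [p i],
   [p' i], we get [q i + q' i = e] for a fixed nonzero [e], [<q i, q' i> = 0],
   and [2 * sum_(j in J) q j = |J| e].  Nonnegativity and orthogonality force
   disjoint supports, so at a coordinate [t] with [e_t <> 0] each [q j t] is
   either [0] or [e_t]; hence [|J|] is twice the number of [j] in [J] with
   [q j t <> 0], contradicting the oddness of [|J|]. *)

Section Inner.

Variables (R : realType) (d : nat).
Implicit Types u v : 'rV[R]_d.

Lemma innerC u v : inner u v = inner v u.
Proof. by apply: eq_bigr => t _; rewrite mulrC. Qed.

Lemma inner0l v : inner 0 v = 0.
Proof. by rewrite /inner big1 // => t _; rewrite mxE mul0r. Qed.

Lemma inner_self_ge0 v : 0 <= inner v v.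
Proof. by apply: sumr_ge0 => t _; rewrite -expr2 sqr_ge0. Qed.

Lemma inner_self_eq0 v : inner v v = 0 -> v = 0.
Proof.
move=> v0; apply/rowP => t; rewrite mxE.
have /eqP : v 0 t * v 0 t = 0.
  by apply: (psumr_eq0P _ v0) => // s _; rewrite -expr2 sqr_ge0.
by rewrite mulf_eq0 orbb => /eqP.
Qed.

Lemma inner_nonneg_eq0 u v : (forall t, 0 <= u 0 t) -> (forall t, 0 <= v 0 t) ->
  inner u v = 0 -> forall t, u 0 t * v 0 t = 0.
Proof.
by move=> u_ge0 v_ge0 uv0 t; apply: (psumr_eq0P _ uv0) => // s _; apply: mulr_ge0.
Qed.

End Inner.

Section LinearCombination.

Variables (R : realType) (I : finType).

Definition lincomb m (g : I -> 'rV[R]_m) (x : I -> R) : 'rV[R]_m := \sum_i x i *: g i.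

Lemma inner_lincomb d (g : I -> 'rV[R]_d) (x y : I -> R) :
  inner (lincomb g x) (lincomb g y) = \sum_k \sum_l x k * y l * inner (g k) (g l).
Proof.
rewrite /inner /lincomb.
transitivity (\sum_(t < d) \sum_k \sum_l x k * y l * (g k 0 t * g l 0 t)).
  apply: eq_bigr => t _; rewrite !summxE big_distrl; apply: eq_bigr => k _.
  by rewrite big_distrr; apply: eq_bigr => l _; rewrite !mxE mulrACA.
rewrite exchange_big; apply: eq_bigr => k _; rewrite exchange_big.
by apply: eq_bigr => l _; rewrite mulr_sumr.
Qed.

Lemma lincomb_indicator d (g : I -> 'rV[R]_d) (m : R) (A : {set I}) :
  lincomb g (fun i => m * (i \in A)%:R) = m *: \sum_(i in A) g i.
Proof.
rewrite /lincomb scaler_sumr [RHS]big_mkcond; apply: eq_bigr => i _.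
by case: (i \in A); rewrite ?mulr1 ?mulr0 ?scale0r.
Qed.

Lemma lincombB m (g : I -> 'rV[R]_m) (x y : I -> R) :
  lincomb g x - lincomb g y = lincomb g (fun i => x i - y i).
Proof. by rewrite /lincomb -sumrB; apply: eq_bigr => i _; rewrite scalerBl. Qed.

Variables (d k : nat) (f : I -> 'rV[R]_d) (a : I -> 'rV[R]_k).
Hypothesis same_Gram : forall i j, inner (f i) (f j) = inner (a i) (a j).

Lemma inner_lincomb_same_Gram x y :
  inner (lincomb f x) (lincomb f y) = inner (lincomb a x) (lincomb a y).
Proof.
rewrite !inner_lincomb; apply: eq_bigr => i _; apply: eq_bigr => j _.
by rewrite same_Gram.
Qed.

Lemma lincomb_eq_same_Gram x y : lincomb f x = lincomb f y -> lincomb a x = lincomb a y.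
Proof.
move=> fxy; apply/eqP; rewrite -subr_eq0; apply/eqP/inner_self_eq0.
by rewrite lincombB -inner_lincomb_same_Gram -(lincombB f) fxy subrr inner0l.
Qed.

End LinearCombination.

Section GramMatrix.

Variables (R : realType) (d N : nat) (f : 'I_N -> 'rV[R]_d).

Lemma Gram_quadratic_form (x : 'rV[R]_N) :
  (x *m Gram f *m x^T) 0 0 = inner (lincomb f (x 0)) (lincomb f (x 0)).
Proof.
rewrite inner_lincomb mxE exchange_big; apply: eq_bigr => l _.
by rewrite !mxE big_distrl; apply: eq_bigr => k _; rewrite !mxE mulrAC.
Qed.

Lemma Gram_doubly_nonneg : (forall k l, 0 <= inner (f k) (f l)) ->
  doubly_nonneg (Gram f).
Proof.
move=> f_ge0; split; first by apply/matrixP => k l; rewrite !mxE innerC.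
split=> [x|k l]; last by rewrite mxE.
by rewrite Gram_quadratic_form inner_self_ge0.
Qed.

End GramMatrix.

Section Family.

Variables (R : realType) (d n : nat) (p p' : 'I_n -> 'rV[R]_d).

Lemma fam_lshift i : fam p p' (lshift n i) = p i.
Proof. by rewrite /fam (unsplitK (inl _ i)). Qed.

Lemma fam_rshift i : fam p p' (rshift n i) = p' i.
Proof. by rewrite /fam (unsplitK (inr _ i)). Qed.

End Family.

Section ShiftSums.

Variables (V : nmodType) (n : nat) (g : 'I_(n + n) -> V).

Lemma sum_shift_pair i :
  \sum_(k in [set lshift n i; rshift n i]) g k = g (lshift n i) + g (rshift n i).
Proof. by rewrite big_setU1 ?inE ?eq_lrshift //= big_set1. Qed.

Lemma sum_imset_lshift (J : {set 'I_n}) :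
  \sum_(k in lshift n @: J) g k = \sum_(j in J) g (lshift n j).
Proof. by rewrite big_imset //= => i j _ _; apply: lshift_inj. Qed.

End ShiftSums.

Section SameGramFamily.

Variables (R : realType) (d k n : nat) (p p' : 'I_n -> 'rV[R]_d).
Variable a : 'I_(n + n) -> 'rV[R]_k.
Hypothesis same_Gram : forall i j, inner (fam p p' i) (fam p p' j) = inner (a i) (a j).

Lemma shift_pair_same_Gram i j : p i + p' i = p j + p' j ->
  a (lshift n i) + a (rshift n i) = a (lshift n j) + a (rshift n j).
Proof.
move=> pp'ij; rewrite -!sum_shift_pair -[LHS]scale1r -[RHS]scale1r.
rewrite -!lincomb_indicator; apply: (lincomb_eq_same_Gram same_Gram).
by rewrite !lincomb_indicator !sum_shift_pair !fam_lshift !fam_rshift pp'ij.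
Qed.

Lemma shift_pair_eq0_same_Gram i :
  a (lshift n i) + a (rshift n i) = 0 -> p i + p' i = 0.
Proof.
move=> a0; rewrite -(fam_lshift p p') -(fam_rshift p p') -sum_shift_pair.
apply: inner_self_eq0; rewrite -[\sum_(l in _) _]scale1r -lincomb_indicator.
rewrite (inner_lincomb_same_Gram same_Gram) lincomb_indicator scale1r.
by rewrite sum_shift_pair a0 inner0l.
Qed.

Lemma sum_lshift_same_Gram (J : {set 'I_n}) (mu nu : R) i :
  mu *: \sum_(j in J) p j = nu *: (p i + p' i) ->
  mu *: \sum_(j in J) a (lshift n j) = nu *: (a (lshift n i) + a (rshift n i)).
Proof.
move=> pJ; rewrite -sum_imset_lshift -sum_shift_pair -!lincomb_indicator.
apply: (lincomb_eq_same_Gram same_Gram).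
rewrite !lincomb_indicator sum_imset_lshift sum_shift_pair fam_lshift fam_rshift.
by rewrite (eq_bigr _ (fun j _ => fam_lshift p p' j)).
Qed.

Lemma inner_shift_same_Gram i :
  inner (a (lshift n i)) (a (rshift n i)) = inner (p i) (p' i).
Proof. by rewrite -same_Gram fam_lshift fam_rshift. Qed.

End SameGramFamily.

Lemma even_card_complementary_halves (R : realType) (k : nat) (I : finType)
    (q q' : I -> 'rV[R]_k) (e : 'rV[R]_k) (J : {set I}) :
  (forall i t, 0 <= q i 0 t) -> (forall i t, 0 <= q' i 0 t) ->
  (forall i, q i + q' i = e) -> (forall i, inner (q i) (q' i) = 0) -> e != 0 ->
  2%:R *: \sum_(j in J) q j = #|J|%:R *: e -> ~~ odd #|J|.
Proof.
move=> q_ge0 q'_ge0 qq'e qq'0 e0 sumJ.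
have [t et] : exists t, e 0 t != 0.
  apply/existsP; apply: contraR e0 => /existsPn e0.
  by apply/eqP/rowP => t; rewrite mxE; apply/eqP/negPn/e0.
have q_coord j : q j 0 t = (q j 0 t != 0)%:R * e 0 t.
  have [-> | qj0] := eqVneq (q j 0 t) 0; first by rewrite mul0r.
  have /eqP := inner_nonneg_eq0 (q_ge0 j) (q'_ge0 j) (qq'0 j) t.
  by rewrite mulf_eq0 (negbTE qj0) /= -(qq'e j) mxE mul1r => /eqP ->; rewrite addr0.
have := congr1 (fun v : 'rV[R]_k => v 0 t) sumJ.
rewrite /= !mxE summxE (eq_bigr _ (fun j _ => q_coord j)) -mulr_suml -natr_sum.
rewrite mulrA -natrM => /(mulIf et)/eqP; rewrite eqr_nat => /eqP <-.
by rewrite oddM.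
Qed.

Theorem theorem4p10 (R : realType) (d n : nat) (p p' : 'I_n -> 'rV[R]_d) :
  (exists c : 'rV[R]_d,
     c != 0 /\
     (forall i, (2%:R)^-1 *: (p i + p' i) = c) /\
     (exists J : {set 'I_n}, odd #|J| /\ \sum_(j in J) p j = #|J|%:R *: c)) ->
  (forall i, inner (p i) (p' i) = 0) ->
  (forall k l : 'I_(n + n), 0 <= inner (fam p p' k) (fam p p' l)) ->
  doubly_nonneg (Gram (fam p p')) /\ ~ completely_positive (Gram (fam p p')).
Proof.
move=> [c [c0 [mid_c [J [oddJ sumJ]]]]] pp'0 fam_ge0.
split; first exact: Gram_doubly_nonneg.
move=> [k [_ [a [a_ge0 Ga]]]].
have same_Gram i j : inner (fam p p' i) (fam p p' j) = inner (a i) (a j).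
  by rewrite -Ga mxE.
have [i0 _] : exists i0, i0 \in J.
  by apply/set0Pn; apply: contraTneq oddJ => ->; rewrite cards0.
have pp'c i : p i + p' i = 2%:R *: c.
  by rewrite -(mid_c i) scalerA divff ?pnatr_eq0 ?scale1r.
have mid_neq0 : p i0 + p' i0 != 0 by rewrite pp'c scaler_eq0 pnatr_eq0.
apply/negP: oddJ.
apply: (even_card_complementary_halves (q := fun i => a (lshift n i))
  (q' := fun i => a (rshift n i)) (e := a (lshift n i0) + a (rshift n i0))).
- by move=> i t; apply: a_ge0.
- by move=> i t; apply: a_ge0.
- by move=> i; apply: (shift_pair_same_Gram same_Gram); rewrite !pp'c.
- by move=> i; rewrite (inner_shift_same_Gram same_Gram) pp'0.
- by apply: contra_neq mid_neq0; apply: (shift_pair_eq0_same_Gram same_Gram).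
- apply: (sum_lshift_same_Gram same_Gram).
  by rewrite sumJ pp'c !scalerA mulrC.
Qed.
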